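(* Let $G=(V,E)$ be a $K_4$-free graph and $T=(V,E_t)$ a spanning tree of $G$ such that for every edge $uv\in E$ and every $w\in P_T(u,v)$ we have $uw,vw\in E$. Let $\mathcal C$ be an induced chordless cycle $C_k$ in $G$ with $k\ge 4$, with vertices $c_1,\dots,c_k$. Then there is a vertex $w\notin\{c_1,\dots,c_k\}$ adjacent to all of $c_1,\dots,c_k$ (so $\mathcal C$ and $w$ form a wheel $W_k$), and no edge of $\mathcal C$ belongs to $E_t$.
   Context: All graphs are finite, simple, undirected and connected. For a tree $T$ and vertices $u,v$, $P_T(u,v)$ denotes the set of vertices on the path from $u$ to $v$ in $T$ excluding $u$ and $v$. A chordless cycle $C_k$ consists of vertices $v_1,\dots,v_k$ with edges exactly $v_iv_{i+1}$ (indices mod $k$) among them. A wheel $W_k$ is a $C_k$ plus a vertex adjacent to all its vertices. $K_4$-free means no clique on four vertices. *)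

From mathcomp Require Import all_boot.
Set Implicit Arguments. Unset Strict Implicit. Unset Printing Implicit Defensive.

Definition simple_graph (V : finType) (e : rel V) : Prop :=
  symmetric e /\ irreflexive e.

Definition connected_graph (V : finType) (e : rel V) : Prop :=
  forall u v : V, connect e u v.

Definition K4_free (V : finType) (e : rel V) : Prop :=
  ~ exists a b c d : V,
      [/\ e a b, e a c, e a d & [/\ e b c, e b d & e c d]].

Definition is_tree (V : finType) (t : rel V) : Prop :=
  simple_graph t /\ connected_graph t /\
  forall p : seq V, uniq p -> 3 <= size p -> ~~ cycle t p.

Definition spanning_tree (V : finType) (e t : rel V) : Prop :=
  is_tree t /\ subrel t e.

(* w \in P_T(u,v): w lies on the (unique) u-v path of the tree t, and w is not
   an endpoint.  The path u :: p is simple, goes from u to v. *)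
Definition on_tree_path (V : finType) (t : rel V) (u v w : V) : Prop :=
  exists p : seq V,
    [/\ path t u p, last u p = v, uniq (u :: p), w \in p & w != v].

Definition induced_cycle (V : finType) (e : rel V) (k : nat) (c : 'I_k -> V) : Prop :=
  injective c /\
  forall i j : 'I_k,
    e (c i) (c j) = ((i.+1 %% k == j :> nat) || (j.+1 %% k == i :> nat)).

From mathcomp Require Import all_boot.
From mathcomp Require Import zify.
Set Implicit Arguments. Unset Strict Implicit. Unset Printing Implicit Defensive.

(* Every edge uv of G joins two vertices at tree distance at most
   2: otherwise the tree path u x1 x2 ... v has two interior vertices x1, x2
   which, by the path property, form a K4 with u and v.  Unroll the induced
   cycle into a k-periodic sequence x_0, x_1, ... and route each cycle edge
   x_n x_(n+1) through the tree: either directly, or via a "middle" vertex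
   m_n, which is never a cycle vertex since consecutive vertices of an induced
   cycle of length >= 4 have no common neighbour on the cycle.  Going once
   around the cycle gives a closed walk in the tree that visits x_(n+1) only
   once, and in a forest such a walk must leave and come back through the
   same neighbour.  Hence the vertex before x_(n+1) equals the vertex after
   it; this forces every hop to have a middle vertex and all middle vertices
   to coincide: the common one is the hub w of the wheel.  Finally a cycle
   edge that is also a tree edge would close a triangle with w in the tree. *)

Lemma modn_lt_double k m : m < k.*2 -> m %% k = if m < k then m else m - k.
Proof.
case: (ltnP m k) => [lt_mk _|le_km lt_m2k]; first exact: modn_small.
by rewrite -{1}(subnK le_km) modnDr modn_small //; lia.
Qed.

Lemma modnS_mod k a : (a %% k).+1 %% k = a.+1 %% k.
Proof. by rewrite -addn1 modnDml addn1. Qed.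

(* On a cycle of length k >= 4 no index b is cyclically adjacent to both a
   and a + 1 (cycles of length at least 4 have no triangles). *)
Lemma cyclic_index_no_triangle k a b : 4 <= k ->
  (a.+1 == b %[mod k]) || (b.+1 == a %[mod k]) ->
  (b.+1 == a.+1 %[mod k]) || (a.+2 == b %[mod k]) -> False.
Proof.
move=> k_ge4; rewrite -(modnS_mod k a) -(modnS_mod k b) -[a.+2]addn2 -modnDml addn2.
have [lt_a lt_b] : a %% k < k /\ b %% k < k by rewrite !ltn_pmod //; lia.
move: (a %% k) (b %% k) lt_a lt_b => {}a {}b lt_a lt_b.
by rewrite !modn_lt_double; try lia; case: ifP; case: ifP; case: ifP; lia.
Qed.

Section ForestWalk.
Variables (V : finType) (t : rel V).
Hypothesis t_acyclic : forall p : seq V, uniq p -> 3 <= size p -> ~~ cycle t p.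

Lemma forest_closed_walk y q :
  path t y q -> t (last y q) y -> y \notin q -> head y q = last y q.
Proof.
case: q => [//|z p] /= /andP[t_yz path_zp] t_back.
rewrite inE negb_or => /andP[y_neq_z y_notin_p].
apply/eqP/negPn/negP => z_neq_last.
case: (shortenP path_zp) t_back z_neq_last => p' path_zp' uniq_zp' sub_p' t_back.
have y_notin_p' : y \notin p' by apply: contra y_notin_p => /sub_p'.
case: p' {sub_p'} path_zp' uniq_zp' y_notin_p' t_back
  => [|a p'] path_zp' uniq_zp' y_notin_p' t_back; first by rewrite eqxx.
move=> _; have uniq_cyc : uniq [:: y, z, a & p'].
  by rewrite cons_uniq uniq_zp' in_cons negb_or y_neq_z y_notin_p'.
move/negP: (t_acyclic uniq_cyc isT); apply.
by rewrite /cycle rcons_path; apply/andP; split; first by rewrite /= t_yz.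
Qed.

(* A k-periodic sequence of distinct stations x_n, where station x_n is joined
   to x_(n+1) by a tree hop: a direct edge, or two edges through a middle
   vertex mid n that is never a station. *)
Section PeriodicWalk.
Variables (k : nat) (x : nat -> V) (mid : nat -> option V).

Definition approach n : seq V := if mid n is Some w then [:: w] else [::].
Definition hop n : seq V := rcons (approach n) (x n.+1).
(* The tree neighbours of x_(n+1) reached just before it, and of x_n reached
   just after it, along the hop from x_n to x_(n+1). *)
Definition before n : V := last (x n) (approach n).
Definition after n : V := head (x n.+1) (approach n).
Definition walk a m : seq V := flatten [seq hop j | j <- iota a m].

Hypothesis x_periodic : forall n, x (n + k) = x n.
Hypothesis x_inj : forall m n, x m = x n -> m = n %[mod k].
Hypothesis mid_fresh : forall n m, mid n != Some (x m).
Hypothesis hop_path : forall n, path t (x n) (hop n).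

Lemma x_shift_neq n d : 0 < d < k -> x (n + d) != x n.
Proof.
move=> /andP[d_gt0 d_ltk]; apply/eqP => /x_inj /eqP.
by rewrite -[X in _ == X %[mod _]]addn0 eqn_modDl mod0n modn_small //; lia.
Qed.

Lemma walk_path a m : path t (x a) (walk a m) /\ last (x a) (walk a m) = x (a + m).
Proof.
elim: m a => [|m IHm] a /=; first by rewrite addn0.
have [path_rest last_rest] := IHm a.+1.
by rewrite cat_path last_cat hop_path /hop last_rcons path_rest last_rest addSnnS.
Qed.

Lemma mem_walk a m v : v \in walk a m ->
  (exists n, mid n = Some v) \/ exists2 j, a < j <= a + m & v = x j.
Proof.
case/flatten_mapP => j; rewrite mem_iota => /andP[le_aj lt_j].
rewrite /hop mem_rcons inE => /orP[/eqP ->|]; first by right; exists j.+1 => //; lia.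
by rewrite /approach; case E: (mid j) => [w|] //; rewrite inE => /eqP ->; left; exists j.
Qed.

(* Going once around the cycle from x_(n+1) shows that the walk enters and
   leaves x_(n+1) through the same tree neighbour. *)
Lemma turn_back (k_gt1 : 1 < k) n : before n = after n.+1.
Proof.
have [path_w last_w] := walk_path n.+1 k.-1.
have Ek : n.+1 + k.-1 = n + k by lia.
rewrite Ek x_periodic in last_w.
have := hop_path n; rewrite /hop rcons_path => /andP[path_app t_back].
set q := walk n.+1 k.-1 ++ approach n.
have path_q : path t (x n.+1) q by rewrite cat_path path_w last_w path_app.
have last_q : last (x n.+1) q = before n by rewrite last_cat last_w.
have head_q : head (x n.+1) q = after n.+1.
  rewrite /q /walk (_ : k.-1 = k.-2.+1) /=; last lia.
  by rewrite /hop /after; case: (approach _).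
have y_notin_q : x n.+1 \notin q.
  rewrite mem_cat negb_or; apply/andP; split.
    apply/negP => /mem_walk [[j /eqP]|[j /andP[lt_j le_j] /esym/eqP]].
      by apply/negP; apply: mid_fresh.
    by rewrite -(subnKC (ltnW lt_j)); apply/negP; apply: x_shift_neq; lia.
  by rewrite /approach; case E: (mid n) => [w|] //; rewrite inE;
     apply: contra (mid_fresh n n.+1) => /eqP ->; rewrite E.
by rewrite -last_q -head_q forest_closed_walk // last_q.
Qed.

Lemma hub_step (k_gt2 : 2 < k) n : exists w, mid n = Some w /\ mid n.+1 = Some w.
Proof.
have := turn_back (ltnW k_gt2) n; rewrite /before /after /approach.
case E1: (mid n) => [a|]; case E2: (mid n.+1) => [b|] /= eq_ab.
- by exists b; rewrite eq_ab.
- by have := mid_fresh n n.+2; rewrite E1 eq_ab eqxx.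
- by have := mid_fresh n.+1 n; rewrite E2 eq_ab eqxx.
- by have := x_shift_neq n (d:=2); rewrite addn2 eq_ab eqxx; lia.
Qed.

Lemma common_hub (k_gt2 : 2 < k) : exists w, forall n, mid n = Some w.
Proof.
have [w [mid0 _]] := hub_step k_gt2 0.
exists w; elim=> [//|n IHn].
by have [w' [mid_n ->]] := hub_step k_gt2 n; rewrite -mid_n IHn.
Qed.

(* A hop through a middle vertex is not a tree edge: it would close a
   triangle in the forest. *)
Lemma hop_not_tree_edge (k_gt1 : 1 < k) n w : mid n = Some w -> ~~ t (x n.+1) (x n).
Proof.
move=> mid_n; apply/negP => t_back.
have := hop_path n; rewrite /hop /approach mid_n /= andbT => /andP[t_xw t_wx].
have x_notin : x n \notin [:: w; x n.+1].
  have x_succ_neq : x n.+1 != x n by rewrite -addn1 x_shift_neq //; lia.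
  rewrite !inE negb_or [x n == x n.+1]eq_sym x_succ_neq andbT.
  by apply: contra (mid_fresh n n) => /eqP ->; rewrite mid_n.
have eq_w : w = x n.+1.
  by apply: (forest_closed_walk (y := x n) (q := [:: w; x n.+1])); rewrite //= t_xw t_wx.
by have := mid_fresh n n.+1; rewrite mid_n eq_w eqxx.
Qed.

End PeriodicWalk.
End ForestWalk.

Section UnrolledCycle.
Variables (V : finType) (e : rel V) (k : nat) (c : 'I_k -> V).
Hypothesis k_gt0 : 0 < k.
Hypothesis c_cycle : induced_cycle e c.

Definition unroll n : V := c (Ordinal (ltn_pmod n k_gt0)).

Lemma unroll_val (i : 'I_k) n : n %% k = i -> unroll n = c i.
Proof. by move=> E; congr c; apply: val_inj. Qed.

Lemma unroll_ord (i : 'I_k) : unroll i = c i.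
Proof. by apply: unroll_val; rewrite modn_small. Qed.

Lemma unroll_periodic n : unroll (n + k) = unroll n.
Proof. by apply: unroll_val; rewrite /= modnDr. Qed.

Lemma unroll_inj m n : unroll m = unroll n -> m = n %[mod k].
Proof. by move/(proj1 c_cycle)/(congr1 val). Qed.

Lemma unroll_adj a b : e (unroll a) (unroll b) =
  (a.+1 == b %[mod k]) || (b.+1 == a %[mod k]).
Proof. by rewrite (proj2 c_cycle) /= !modnS_mod. Qed.

Lemma unroll_succ_adj n : e (unroll n) (unroll n.+1).
Proof. by rewrite unroll_adj eqxx. Qed.

Lemma unroll_no_common_neighbour (k_ge4 : 4 <= k) n m :
  e (unroll n) (unroll m) -> e (unroll m) (unroll n.+1) -> False.
Proof.
by rewrite !unroll_adj; apply: cyclic_index_no_triangle.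
Qed.

Lemma unroll_edge i j : e (c i) (c j) -> exists n,
  (c i = unroll n /\ c j = unroll n.+1) \/ (c j = unroll n /\ c i = unroll n.+1).
Proof.
rewrite (proj2 c_cycle) => /orP[/eqP ij|/eqP ji].
- by exists i; left; rewrite unroll_ord (unroll_val ij).
- by exists j; right; rewrite unroll_ord (unroll_val ji).
Qed.

End UnrolledCycle.

(* Under the path property of the spanning tree, every edge of a K4-free graph
   joins vertices at tree distance 1 or 2: two interior vertices x1 x2 on the
   tree path from u to v would give the clique {u, x1, x2, v}. *)
Lemma tree_distance_le2 (V : finType) (e t : rel V) :
  simple_graph e -> K4_free e -> spanning_tree e t ->
  (forall u v w : V, e u v -> on_tree_path t u v w -> e u w /\ e v w) ->
  forall u v, e u v -> t u v \/ exists2 w, t u w & t w v.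
Proof.
move=> [e_sym e_irr] noK4 [[_ [t_conn _]] t_sub] t_paths u v e_uv.
case/connectP: (t_conn u v) => p path_p last_p.
case: (shortenP path_p) last_p => p' path_p' uniq_p' _ last_p'.
case: p' path_p' uniq_p' last_p' => [|x1 [|x2 [|x3 r]]] /= path_p' uniq_p' last_p'.
- by move: e_uv; rewrite last_p' e_irr.
- by left; rewrite last_p'; case/andP: path_p'.
- by right; rewrite last_p'; exists x1; case/and3P: path_p'.
exfalso; apply: noK4.
have on_path x : x \in [:: x1; x2] -> on_tree_path t u v x.
  move=> x_in; exists [:: x1, x2, x3 & r]; split => //.
  - by rewrite !inE; move: x_in; rewrite !inE => /orP[]->; rewrite ?orbT.
  - apply: contraTneq uniq_p' => x_v; move: x_in; rewrite x_v last_p' !inE.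
    have last_in : (last x3 r == x3) || (last x3 r \in r) by rewrite -in_cons mem_last.
    by case/orP => /eqP <-; rewrite last_in ?orbT /= ?andbF.
have [e_u1 e_v1] := t_paths _ _ _ e_uv (on_path x1 (mem_head _ _)).
have x2_in : x2 \in [:: x1; x2] by rewrite !inE eqxx orbT.
have [e_u2 e_v2] := t_paths _ _ _ e_uv (on_path x2 x2_in).
have e_12 : e x1 x2 by apply: t_sub; case/and3P: path_p'.
by exists u, x1, x2, v; split => //; split => //; rewrite e_sym.
Qed.

Theorem lemma3 (V : finType) (e t : rel V) (k : nat) (c : 'I_k -> V) :
  simple_graph e -> connected_graph e -> K4_free e ->
  spanning_tree e t ->
  (forall u v w : V, e u v -> on_tree_path t u v w -> e u w /\ e v w) ->
  4 <= k -> induced_cycle e c ->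
  (exists w : V, (forall i : 'I_k, w != c i) /\ (forall i : 'I_k, e w (c i)))
  /\ (forall i j : 'I_k, e (c i) (c j) -> ~~ t (c i) (c j)).
Proof.
move=> e_simple _ noK4 t_span t_paths k_ge4 c_cycle.
have [[[t_sym _] [_ t_acyclic]] t_sub] := t_span.
have k_gt2 : 2 < k by lia.
have k_gt0 : 0 < k by lia.
pose x := unroll c k_gt0.
pose mid n := [pick w | t (x n) w && t w (x n.+1)].
have hop_ok n : path t (x n) (hop x mid n).
  rewrite /hop /approach /mid; case: pickP => [w /andP[t1 t2]|none] /=.
    by rewrite t1 t2.
  have [-> //|[w t1 t2]] :=
    tree_distance_le2 e_simple noK4 t_span t_paths (unroll_succ_adj k_gt0 c_cycle n).
  by have := none w; rewrite t1 t2.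
have fresh n m : mid n != Some (x m).
  rewrite /mid; case: pickP => [w /andP[t1 t2]|//]; apply/eqP => -[w_eq].
  rewrite w_eq in t1 t2.
  exact: (unroll_no_common_neighbour c_cycle k_ge4 (t_sub _ _ t1) (t_sub _ _ t2)).
have x_inj := unroll_inj c_cycle (k_gt0 := k_gt0).
have [w hub] := common_hub t_acyclic (unroll_periodic c k_gt0) x_inj fresh hop_ok k_gt2.
have no_tree_edge n : ~~ t (x n.+1) (x n).
  by apply: (hop_not_tree_edge t_acyclic x_inj fresh hop_ok _ (hub n)); lia.
split.
  exists w; split => i; rewrite -(unroll_ord c k_gt0).
    by have := fresh i i; rewrite hub; apply: contra => /eqP->.
  have := hop_ok i; rewrite /hop /approach hub /= => /andP[t1 _].
  by rewrite (proj1 e_simple); apply: t_sub.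
move=> i j /(unroll_edge k_gt0 c_cycle) [n [[-> ->]|[-> ->]]].
  by rewrite t_sym no_tree_edge.
exact: no_tree_edge.
Qed.
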